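(* Let $k,m,n$ be positive integers. For all $X\in M_{m\times n}(R_k)$ and $Y\in M_{n\times m}(R_k)$ we have $\mathfrak{T}_k(XY)=\mathfrak{T}_k(YX)$ in $\mathbb{Z}/k\mathbb{Z}$.
   Context: $\mathbb{N}=\{1,2,3,\dots\}$. $R$ denotes the ring of all $\mathbb{N}\times\mathbb{N}$ integer matrices with only finitely many nonzero entries in each row and each column, with entrywise addition and multiplication $(AB)_{i,j}=\sum_{l\ge1}a_{i,l}b_{l,j}$. Fix a positive integer $k$. Partition $\mathbb{N}$ into consecutive blocks $J_1=\{1\}$ and, for $m\ge2$, $J_m=\{2+k(m-2),\dots,1+k(m-1)\}$. For $A\in R$, the block $A^{m,n}$ is the submatrix with rows indexed by $J_m$ and columns by $J_n$. $R_k$ is the subring of $A\in R$ such that for all but finitely many pairs $(m,n)$ with $m,n\ge2$, $A^{m,n}=cI_k$ for some integer $c$. For a finite square integer matrix $M$, $\operatorname{t}_k(M)\in\mathbb{Z}/k\mathbb{Z}$ is the residue class of the sum of its diagonal entries. For $A\in R_k$, $\operatorname{T}_k(A)=\sum_{n\ge1}\operatorname{t}_k(A^{n,n})\in\mathbb{Z}/k\mathbb{Z}$ (a finite sum). For a square matrix $W\in M_{d\times d}(R_k)$, $\mathfrak{T}_k(W)=\sum_{l=1}^d\operatorname{T}_k(W_{l,l})$. *)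

From HB Require Import structures.
From mathcomp Require Import all_boot all_order all_algebra.
From Stdlib Require Import ClassicalEpsilon.
Set Implicit Arguments. Unset Strict Implicit. Unset Printing Implicit Defensive.
Import Order.TTheory GRing.Theory Num.Theory.
Local Open Scope ring_scope.

(* An N x N integer matrix, N = {1,2,3,...}.  We use functions nat -> nat -> int;
   index 0 is padding and is required to carry only zero entries (see inR). *)
Definition NMat := nat -> nat -> int.

(* Sum of a finitely supported sequence f : nat -> int, i.e. sum_{l>=0} f l,
   computed as sum_{l < N} f l for a (chosen) N beyond which f vanishes.
   (Only meaningful when f is eventually zero, which is the case where used.) *)
Definition fsum (f : nat -> int) : int :=
  \sum_(l < epsilon (inhabits 0%N) (fun N => forall l, (N <= l)%N -> f l = 0)) f l.

Definition inR (A : NMat) : Prop :=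
  (forall j, A 0%N j = 0) /\ (forall i, A i 0%N = 0) /\
  (forall i, exists N, forall j, (N <= j)%N -> A i j = 0) /\
  (forall j, exists N, forall i, (N <= i)%N -> A i j = 0).

Definition zeroR : NMat := fun _ _ => 0.
Definition addR (A B : NMat) : NMat := fun i j => A i j + B i j.
Definition mulR (A B : NMat) : NMat := fun i j => fsum (fun l => A i l * B l j).

(* Blocks: J_1 = {1}, J_m = {2+k(m-2), ..., 1+k(m-1)} for m >= 2.
   For m, n >= 2, the k x k block A^{m,n}. *)
Definition blockR (k : nat) (A : NMat) (m n : nat) : 'M[int]_k :=
  \matrix_(a < k, b < k) A (2 + k * (m - 2) + a)%N (2 + k * (n - 2) + b)%N.

Definition inRk (k : nat) (A : NMat) : Prop :=
  inR A /\
  exists s : seq (nat * nat), forall m n, (2 <= m)%N -> (2 <= n)%N ->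
    (m, n) \notin s -> exists c : int, blockR k A m n = c%:M.

Definition diag_block_trace (k : nat) (A : NMat) (n : nat) : int :=
  if n == 1%N then A 1%N 1%N else \tr (blockR k A n n).

(* Elements of Z/kZ are represented
   by integers; each term is reduced to its residue in [0,k) so that the sum is
   finitely supported, and the result is to be compared modulo k. *)
Definition Tk (k : nat) (A : NMat) : int :=
  fsum (fun n => if n == 0%N then 0 else (diag_block_trace k A n %% k)%Z).

Definition mxmulR (m n p : nat) (X : 'M[NMat]_(m, n)) (Y : 'M[NMat]_(n, p))
  : 'M[NMat]_(m, p) :=
  \matrix_(i < m, j < p) \big[addR/zeroR]_(l < n) mulR (X i l) (Y l j).

Definition frakTk (k d : nat) (W : 'M[NMat]_d) : int :=
  \sum_(l < d) Tk k (W l l).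

From mathcomp Require Import all_boot all_order all_algebra.
From Stdlib Require Import ClassicalEpsilon.
From mathcomp Require Import zify.
Set Implicit Arguments. Unset Strict Implicit. Unset Printing Implicit Defensive.
Import Order.TTheory GRing.Theory Num.Theory.
Local Open Scope ring_scope.

(* Outside a finite top-left corner, every entry of X and Y is made of scalar
   k x k blocks.  Fix M such that every block A^{q+2,p+2} with q >= M or p >= M
   is scalar and column 1 vanishes below row 2 + kM, and P >= M such that the
   first 2 + kM rows vanish beyond column 2 + kP.
   A diagonal block of index >= M of a product of two such matrices is
   (sum_p c_p d_p) I_k, whose trace is divisible by k; hence T_k(W) is congruent
   to the trace of the top-left corner of W, and frak T_k(XY) to the sum over
   u, l of sum_{i < 2+kM, j < 2+kP} X_ul(i,j) Y_lu(j,i).  Exchanging X and Y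
   changes this finite sum only by the terms pairing a corner row with a block of
   index >= M; these pair scalar blocks with scalar blocks and contribute
   multiples of k. *)

Lemma big_ord_vanishing_tail {V : nmodType} (f : nat -> V) L L' : (L <= L')%N ->
  (forall j, (L <= j)%N -> f j = 0) -> \sum_(j < L') f j = \sum_(j < L) f j.
Proof.
move=> hL hf; rewrite -!(big_mkord xpredT) (@big_cat_nat _ _ _ L 0 L' _ _ (leq0n L) hL) /=.
by rewrite [X in _ + X]big1_seq ?addr0 // => j /andP[_]; rewrite mem_index_iota => /andP[/hf].
Qed.

Lemma fsumE (f : nat -> int) L : (forall j, (L <= j)%N -> f j = 0) ->
  fsum f = \sum_(j < L) f j.
Proof.
move=> hf; rewrite /fsum; set N := epsilon _ _.
have hN : forall j, (N <= j)%N -> f j = 0 :=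
  epsilon_spec _ (fun N => forall l, (N <= l)%N -> f l = 0) (ex_intro _ L hf).
case: (leqP N L) => [hNL | /ltnW hLN]; first by rewrite (big_ord_vanishing_tail hNL hN).
by rewrite (big_ord_vanishing_tail hLN hf).
Qed.

Lemma big_addRE (I : Type) (r : seq I) (P : pred I) (F : I -> NMat) i j :
  (\big[addR/zeroR]_(l <- r | P l) F l) i j = \sum_(l <- r | P l) F l i j.
Proof.
apply: (big_rec2 (fun (A : NMat) (x : int) => A i j = x)) => // l A x _ hA.
by rewrite /addR hA.
Qed.

Lemma dvdz_mulrn (x : int) k : (k%:Z %| x *+ k)%Z.
Proof. by rewrite -mulr_natr natz dvdz_mull. Qed.

Lemma modz_sub_dvd (x d : int) : (d %| (x %% d)%Z - x)%Z.
Proof. by rewrite -eqz_mod_dvd modz_mod. Qed.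

Lemma finite_uniform_bound (T : finType) (Q : T -> nat -> Prop) :
  (forall x N N', Q x N -> (N <= N')%N -> Q x N') ->
  (forall x, exists N, Q x N) -> exists N, forall x, Q x N.
Proof.
move=> hmono /fin_all_exists[f hf]; exists (\max_x f x) => x.
exact: hmono (hf x) (leq_bigmax x).
Qed.

Lemma leq_block_start k N N' : (N <= N')%N -> (2 + k * N <= 2 + k * N')%N.
Proof. by move=> hN; rewrite leq_add2l leq_mul2l hN orbT. Qed.

Lemma blockRE k (A : NMat) q p a b :
  blockR k A q.+2 p.+2 a b = A (2 + k * q + a)%N (2 + k * p + b)%N.
Proof. by rewrite mxE !subSS !subn0. Qed.

Lemma sum_blocks {V : nmodType} k P (F : nat -> V) :
  \sum_(j < 2 + k * P) F j =
    F 0%N + F 1%N + \sum_(p < P) \sum_(b < k) F (2 + k * p + b)%N.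
Proof.
elim: P => [|P IH]; first by rewrite muln0 big_ord0 addr0 !big_ord_recr big_ord0 /= add0r.
have -> : (2 + k * P.+1 = (2 + k * P) + k)%N by rewrite mulnS; lia.
by rewrite big_split_ord /= IH big_ord_recr /= addrA.
Qed.

Lemma sum_blocks_split {V : nmodType} k M P (F : nat -> V) : (M <= P)%N ->
  \sum_(j < 2 + k * P) F j =
    \sum_(j < 2 + k * M) F j + \sum_(M <= p < P) \sum_(b < k) F (2 + k * p + b)%N.
Proof.
move=> hMP; rewrite !sum_blocks.
rewrite -!(big_mkord xpredT (fun p => \sum_(b < k) F (2 + k * p + b)%N)).
by rewrite (@big_cat_nat _ _ _ M 0 P _ _ (leq0n M) hMP) /= !addrA.
Qed.

Lemma sum_scalar_block_pair k (A B : NMat) q p (c d : int) :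
  blockR k A q.+2 p.+2 = c%:M -> blockR k B p.+2 q.+2 = d%:M ->
  \sum_(a < k) \sum_(b < k) A (2 + k * q + a)%N (2 + k * p + b)%N
      * B (2 + k * p + b)%N (2 + k * q + a)%N = (c * d) *+ k.
Proof.
move=> hA hB; rewrite -mxtrace_scalar scalar_mxM -hA -hB.
by apply: eq_bigr => a _; rewrite mxE; apply: eq_bigr => b _; rewrite !blockRE.
Qed.

Record scalar_beyond k M (A : NMat) : Prop := ScalarBeyond {
  scalar_beyond_col1 : forall i, (2 + k * M <= i)%N -> A i 1%N = 0;
  scalar_beyond_block : forall q p, (M <= q)%N \/ (M <= p)%N ->
    exists c : int, blockR k A q.+2 p.+2 = c%:M }.

Lemma scalar_beyond_mono k M M' A : (M <= M')%N ->
  scalar_beyond k M A -> scalar_beyond k M' A.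
Proof.
move=> hM [hcol hblock]; split=> [i hi | q p hqp]; first exact/hcol/(leq_trans _ hi)/leq_block_start.
by apply: hblock; case: hqp => h; [left | right]; exact: leq_trans h.
Qed.

Lemma inRk_scalar_beyond k A : (0 < k)%N -> inRk k A -> exists M, scalar_beyond k M A.
Proof.
move=> hk [[_ [_ [_ hcol]]] [s hs]]; have [N hN] := hcol 1%N.
pose B := \max_(e <- s) maxn e.1 e.2.
exists (maxn N B); split=> [i hi | q p hqp].
  by apply: hN; apply: leq_trans hi; have := leq_maxl N B; nia.
apply: hs => //; apply/negP => hin.
have := @leq_bigmax_seq _ s xpredT (fun e : nat * nat => maxn e.1 e.2) _ hin isT.
by rewrite -/B /=; have := leq_maxr N B; case: hqp; lia.
Qed.

Record tame k M P (A : NMat) : Prop := Tame {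
  tame_row0 : forall j, A 0%N j = 0;
  tame_col0 : forall i, A i 0%N = 0;
  tame_row_finite : forall i, exists N, forall j, (N <= j)%N -> A i j = 0;
  tame_scalar :> scalar_beyond k M A;
  tame_corner_rows : forall i, (i < 2 + k * M)%N ->
    forall j, (2 + k * P <= j)%N -> A i j = 0 }.

Lemma exists_tame_bounds k (I : finType) (F : I -> NMat) : (0 < k)%N ->
  (forall x, inRk k (F x)) -> exists M P, (M <= P)%N /\ forall x, tame k M P (F x).
Proof.
move=> hk hF.
have [M hM] : exists M, forall x, scalar_beyond k M (F x).
  apply: finite_uniform_bound => [x N N' hQ hN | x]; first exact: scalar_beyond_mono hN hQ.
  exact: inRk_scalar_beyond (hF x).
pose corner_bound (y : I * 'I_(2 + k * M)) P :=
  forall j, (2 + k * P <= j)%N -> F y.1 y.2 j = 0.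
have [P hP] : exists P, forall y, corner_bound y P.
  apply: finite_uniform_bound => [y N N' h hN j hj | [x i]].
    exact/h/(leq_trans _ hj)/leq_block_start.
  have [[_ [_ [hrow _]]] _] := hF x; have [N hN] := hrow i.
  by exists N => j hj; apply: hN; nia.
exists M, (maxn M P); split=> [|x]; first exact: leq_maxl.
have [[row0 [col0 [rowfin _]]] _] := hF x.
split=> // i hi j hj; apply: (hP (x, Ordinal hi)).
exact/(leq_trans _ hj)/leq_block_start/leq_maxr.
Qed.

Definition corner_trace k M P (A B : NMat) : int :=
  \sum_(i < 2 + k * M) \sum_(j < 2 + k * P) A i j * B j i.

Section TameProducts.

Variables (k M P : nat) (A B : NMat).
Hypotheses (tA : tame k M P A) (tB : tame k M P B).

Lemma blockR_mulR_trace_dvd q : (M <= q)%N ->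
  (k%:Z %| \tr (blockR k (mulR A B) q.+2 q.+2))%Z.
Proof.
move=> hq; pose F (a : 'I_k) j := A (2 + k * q + a)%N j * B j (2 + k * q + a)%N.
have [R hR] : exists R, forall (a : 'I_k) j, (2 + k * R <= j)%N -> A (2 + k * q + a)%N j = 0.
  apply: finite_uniform_bound => [a N N' h hN j hj | a].
    exact/h/(leq_trans _ hj)/leq_block_start.
  have [N hN] := tame_row_finite tA (2 + k * q + a); exists N => j hj; apply: hN.
  by have := ltn_ord a; nia.
have traceE (a : 'I_k) : blockR k (mulR A B) q.+2 q.+2 a a =
    \sum_(p < R) \sum_(b < k) F a (2 + k * p + b)%N.
  rewrite blockRE /mulR (fsumE (L := (2 + k * R)%N)) => [|j /hR ->]; last by rewrite mul0r.
  rewrite (sum_blocks _ _ (F a)) /F (tame_col0 tA) ?(scalar_beyond_col1 tA) ?mul0r ?add0r //.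
  by rewrite (leq_trans _ (leq_addr a _)) // leq_block_start.
rewrite /mxtrace (eq_bigr _ (fun a _ => traceE a)) exchange_big; apply: rpred_sum => p _.
have [c hc] := scalar_beyond_block tA (q := q) (p := p) (or_introl hq).
have [d hd] := scalar_beyond_block tB (q := p) (p := q) (or_intror hq).
by rewrite (sum_scalar_block_pair hc hd) dvdz_mulrn.
Qed.

Lemma corner_block_cross_dvd :
  (k%:Z %| \sum_(i < 2 + k * M) \sum_(M <= p < P) \sum_(b < k)
       A i (2 + k * p + b)%N * B (2 + k * p + b)%N i)%Z.
Proof.
rewrite (sum_blocks _ _ (fun i => \sum_(M <= p < P) \sum_(b < k)
  A i (2 + k * p + b)%N * B (2 + k * p + b)%N i)) big1 ?add0r => [|p _]; last first.
  by rewrite big1 // => b _; rewrite (tame_row0 tA) mul0r.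
rewrite big_nat_cond big1 ?add0r => [|p /andP[/andP[hp _] _]]; last first.
  rewrite big1 // => b _; rewrite (scalar_beyond_col1 tB) ?mulr0 //.
  by rewrite (leq_trans _ (leq_addr b _)) // leq_block_start.
apply: rpred_sum => q _; rewrite exchange_big /= big_nat_cond.
apply: rpred_sum => p /andP[/andP[hp _] _].
have [c hc] := scalar_beyond_block tA (q := q) (p := p) (or_intror hp).
have [d hd] := scalar_beyond_block tB (q := p) (p := q) (or_introl hp).
by rewrite (sum_scalar_block_pair hc hd) dvdz_mulrn.
Qed.

End TameProducts.

Lemma corner_trace_swap k M P (A B : NMat) : (M <= P)%N ->
  tame k M P A -> tame k M P B ->
  (k%:Z %| corner_trace k M P A B - corner_trace k M P B A)%Z.
Proof.
move=> hMP tA tB; rewrite /corner_trace.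
under eq_bigr => i _ do rewrite (sum_blocks_split _ (fun j => A i j * B j i) hMP).
under [X in _ - X]eq_bigr => i _ do rewrite (sum_blocks_split _ (fun j => B i j * A j i) hMP).
rewrite !big_split /= [X in _ - (X + _)]exchange_big /=.
under [X in _ - (X + _)]eq_bigr => i _ do under eq_bigr => j _ do rewrite mulrC.
rewrite opprD addrACA subrr add0r.
by rewrite rpredB ?corner_block_cross_dvd.
Qed.

Lemma Tk_corner_congr k M (W : NMat) : W 0%N 0%N = 0 ->
  (forall q, (M <= q)%N -> (k%:Z %| \tr (blockR k W q.+2 q.+2))%Z) ->
  (k%:Z %| Tk k W - \sum_(i < 2 + k * M) W i i)%Z.
Proof.
move=> hW0 hdvd.
pose t n := if n == 0%N then 0 else diag_block_trace k W n.
have cornerE : \sum_(i < 2 + k * M) W i i = \sum_(n < M.+2) t n.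
  rewrite (sum_blocks _ _ (fun i => W i i)) -(big_mkord xpredT) !big_nat_recl //.
  rewrite /t /= hW0 !add0r big_mkord; congr (_ + _); apply: eq_bigr => q _.
  by rewrite /diag_block_trace /=; apply: eq_bigr => a _; rewrite blockRE.
rewrite cornerE /Tk (fsumE (L := M.+2)) => [|[|[|q]] //= hq]; last exact/dvdz_mod0P/hdvd.
rewrite -sumrB; apply: rpred_sum => n _; rewrite /t.
case: (nat_of_ord n == 0%N); first by rewrite subrr rpred0.
exact: modz_sub_dvd.
Qed.

Lemma frakTk_mxmulR_congr k M P m n (X : 'M[NMat]_(m, n)) (Y : 'M[NMat]_(n, m)) :
  (forall u l, tame k M P (X u l)) -> (forall l u, tame k M P (Y l u)) ->
  (k%:Z %| frakTk k (mxmulR X Y)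
           - \sum_(u < m) \sum_(l < n) corner_trace k M P (X u l) (Y l u))%Z.
Proof.
move=> tX tY; rewrite /frakTk -sumrB; apply: rpred_sum => u _.
set W := mxmulR X Y u u.
have WE i j : W i j = \sum_(l < n) mulR (X u l) (Y l u) i j by rewrite /W /mxmulR mxE big_addRE.
have -> : \sum_(l < n) corner_trace k M P (X u l) (Y l u) = \sum_(i < 2 + k * M) W i i.
  rewrite exchange_big; apply: eq_bigr => i _; rewrite WE; apply: eq_bigr => l _.
  rewrite /mulR (fsumE (L := (2 + k * P)%N)) // => j.
  by move/(tame_corner_rows (tX u l) (ltn_ord i)) ->; rewrite mul0r.
apply: Tk_corner_congr => [|q hq].
  rewrite WE big1 // => l _; rewrite /mulR (fsumE (L := 0%N)) ?big_ord0 // => j _.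
  by rewrite (tame_row0 (tX u l)) mul0r.
have -> : blockR k W q.+2 q.+2 = \sum_(l < n) blockR k (mulR (X u l) (Y l u)) q.+2 q.+2.
  by apply/matrixP => a b; rewrite summxE !blockRE WE; apply: eq_bigr => l _; rewrite blockRE.
by rewrite raddf_sum rpred_sum // => l _; rewrite (blockR_mulR_trace_dvd (tX u l) (tY l u)).
Qed.

Theorem mainTheorem7 (k m n : nat) (hk : (0 < k)%N) (hm : (0 < m)%N) (hn : (0 < n)%N)
  (X : 'M[NMat]_(m, n)) (Y : 'M[NMat]_(n, m))
  (hX : forall i j, inRk k (X i j)) (hY : forall i j, inRk k (Y i j)) :
  (frakTk k (mxmulR X Y) = frakTk k (mxmulR Y X) %[mod k])%Z.
Proof.
pose F (x : 'I_m * 'I_n + 'I_n * 'I_m) :=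
  match x with inl (u, l) => X u l | inr (l, u) => Y l u end.
have hF x : inRk k (F x) by case: x => [[u l] | [l u]]; [exact: hX | exact: hY].
have [M [P [hMP tF]]] := exists_tame_bounds hk hF.
have tX u l : tame k M P (X u l) := tF (inl (u, l)).
have tY l u : tame k M P (Y l u) := tF (inr (l, u)).
have swap : (k%:Z %| \sum_(u < m) \sum_(l < n) corner_trace k M P (X u l) (Y l u)
                   - \sum_(l < n) \sum_(u < m) corner_trace k M P (Y l u) (X u l))%Z.
  rewrite [X in _ - X]exchange_big -sumrB; apply: rpred_sum => u _.
  by rewrite -sumrB; apply: rpred_sum => l _; apply: corner_trace_swap.
have := rpredB (rpredD (frakTk_mxmulR_congr tX tY) swap) (frakTk_mxmulR_congr tY tX).
by rewrite addrA subrK opprB addrA subrK -eqz_mod_dvd => /eqP.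
Qed.
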